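(* Let $\hat K_4$ denote $K_4$ with one edge deleted, and let $Q = K_1 + \hat K_4 + C_5 + C_5 + C_5 + C_5$ (Zykov sum of a single vertex, $\hat K_4$, and four disjoint $5$-cycles). Let $w$ be the vertex of $K_1$ and let $a,b$ be the two non-adjacent vertices of $\hat K_4$. Consider a coloring of the edges of $Q$ in three colors such that the set of edges joining $w$ to the vertices of $\hat K_4$ contains edges of all three colors, and the edges $wa$ and $wb$ have different colors. Then there is a monochromatic triangle in this coloring.
   Context: All graphs are finite, undirected, without loops or multiple edges. The Zykov sum $G_1+G_2$ of two vertex-disjoint graphs is obtained by joining every vertex of $G_1$ to every vertex of $G_2$. *)

From mathcomp Require Import all_boot.
Set Implicit Arguments. Unset Strict Implicit. Unset Printing Implicit Defensive.

Definition khat4_adj (i j : 'I_4) : bool :=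
  (i != j) && ~~ (((val i == 0) && (val j == 1)) || ((val i == 1) && (val j == 0))).

Definition c5_adj (i j : 'I_5) : bool :=
  (val j == (val i).+1 %% 5) || (val i == (val j).+1 %% 5).

Inductive QV : Type :=
  | W
  | Kv of 'I_4
  | Cv of 'I_4 & 'I_5.

(* Adjacency in the Zykov sum: vertices in different summands are adjacent;
   within a summand, the summand's own adjacency is used. *)
Definition Q_adj (x y : QV) : bool :=
  match x, y with
  | W, W => false
  | Kv i, Kv j => khat4_adj i j
  | Cv j k, Cv j' k' => if j == j' then c5_adj k k' else true
  | _, _ => true
  end.

Definition vert_a : 'I_4 := @Ordinal 4 0 isT.
Definition vert_b : 'I_4 := @Ordinal 4 1 isT.

(* Colour every vertex x <> W by c W x.  If the colour class i spans an edge of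
   colour i, that edge and W form a monochromatic triangle; otherwise the edges
   inside class i use only two colours.  Both K6 and K3 + C5 force a
   monochromatic triangle in every 2-colouring of their edges (checked by an
   exhaustive search), so no class contains a 6-clique, nor a triangle joined to
   a 5-cycle.  Cliques add up in a Zykov sum: class i contains the clique formed
   by its vertices in Khat4 (a clique, since a and b receive different colours)
   together with a largest class-i clique of each copy of C5.  Over the three
   classes these cliques have total size at most 15.  Khat4 contributes 4, and a
   copy of C5 contributes at least 3 unless it lies inside a single class i; it
   then contributes 2 and, as it is joined to the class-i clique of the rest,
   that clique has at most 2 vertices.  Such copies therefore have pairwise
   distinct colours, and if there are d of them the total is at least 16 - d
   while it is at most 15 - d. *)

From mathcomp Require Import all_boot zify.
From Stdlib Require Import Classical FunctionalExtensionality.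
From HB Require Import structures.

Set Implicit Arguments. Unset Strict Implicit. Unset Printing Implicit Defensive.

Section TriangleSearch.
Variables (n : nat) (adj : rel nat).

Definition vertex_pairs : seq (nat * nat) := [seq (u, v) | u <- iota 0 n, v <- iota 0 n].

Definition edge_list : seq (nat * nat) :=
  [seq p <- vertex_pairs | (p.1 < p.2) && adj p.1 p.2].

Definition triangle_list : seq (nat * nat * nat) :=
  [seq t <- [seq (p, w) | p <- vertex_pairs, w <- iota 0 n] |
     let: (u, v, w) := t in [&& u < v, v < w, adj u v, adj v w & adj u w]].

Definition edge_index (u v : nat) : nat := index (u, v) edge_list.

Definition triangle_edges : seq (nat * nat * nat) :=
  [seq let: (u, v, w) := t in (edge_index u v, edge_index v w, edge_index u w)
  | t <- triangle_list].

Lemma mem_edge_list u v : u < v -> v < n -> adj u v -> (u, v) \in edge_list.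
Proof.
move=> uv vn auv; rewrite mem_filter /= uv auv.
by apply: allpairs_f; rewrite mem_iota ?(ltn_trans uv vn).
Qed.

Lemma mem_triangle_list u v w : (u, v, w) \in triangle_list ->
  [/\ u < v, v < w, w < n & [/\ adj u v, adj v w & adj u w]].
Proof.
rewrite mem_filter => /andP[/and5P[uv vw auv avw auw]].
case/allpairsP => -[p w'] [_ /[!mem_iota] /andP[_ wn] Et].
by case: Et wn => <- <-; split.
Qed.

End TriangleSearch.

(* [bits] colours the first [size bits] edges; a triangle counts only once all
   its edges are coloured. *)
Definition mono_prefix (T : seq (nat * nat * nat)) (bits : seq bool) : bool :=
  has (fun t => let: (e1, e2, e3) := t in
         [&& e1 < size bits, e2 < size bits, e3 < size bits,
             nth false bits e1 == nth false bits e2 &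
             nth false bits e2 == nth false bits e3]) T.

(* [if] rather than [||]: [vm_compute] evaluates both arguments of [orb]. *)
Fixpoint mono_search T (k : nat) (bits : seq bool) : bool :=
  if mono_prefix T bits then true else
  if k is k'.+1 then mono_search T k' (rcons bits true) && mono_search T k' (rcons bits false)
  else false.

Lemma mono_prefix_cat T bits ext : mono_prefix T bits -> mono_prefix T (bits ++ ext).
Proof.
apply: sub_has => -[[e1 e2] e3] /and5P[h1 h2 h3 eq12 eq23].
by rewrite size_cat !nth_cat h1 h2 h3 eq12 eq23 !ltn_addr.
Qed.

Lemma mono_searchP T k bits : mono_search T k bits ->
  forall ext, size ext = k -> mono_prefix T (bits ++ ext).
Proof.
elim: k bits => [|k IH] bits /=; case: ifP => [/mono_prefix_cat //|_] //.
move=> /andP[Htrue Hfalse] [|b ext] //= [Hsize].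
by rewrite -cat_rcons; case: b; [apply: IH Htrue _ _ | apply: IH Hfalse _ _].
Qed.

Definition arrows_triangle (n : nat) (adj : rel nat) : Prop :=
  forall f : nat -> nat -> bool, exists u v w,
    [/\ u < v, v < w, w < n &
        [/\ adj u v, adj v w, adj u w, f u v = f v w & f v w = f u w]].

Lemma arrows_triangleP n adj :
  mono_search (triangle_edges n adj) (size (edge_list n adj)) [::] -> arrows_triangle n adj.
Proof.
move=> /mono_searchP search_ok f.
have := search_ok [seq f p.1 p.2 | p <- edge_list n adj].
rewrite size_map => /(_ erefl) /hasP[[[e1 e2] e3]].
case/mapP=> -[[u v] w] /[dup] /mem_triangle_list[uv vw wn [auv avw auw]] _ [-> -> ->].
have nth_edge x y : x < y -> y < n -> adj x y ->
    nth false [seq f p.1 p.2 | p <- edge_list n adj] (edge_index n adj x y) = f x y.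
  move=> xy yn axy; have Exy := mem_edge_list xy yn axy.
  by rewrite (nth_map (0, 0)) ?index_mem // nth_index.
have vn := ltn_trans vw wn.
rewrite /= !nth_edge ?(ltn_trans uv vw) // => /and5P[_ _ _ /eqP Euv /eqP Evw].
by exists u, v, w.
Qed.

Definition complete_adj : rel nat := fun u v => u != v.

(* Vertices 0, 1, 2 form the K3, and 3 + k is vertex k of the C5. *)
Definition k3c5_adj : rel nat := fun u v =>
  (u != v) && [|| u < 3, v < 3, v - 3 == (u - 3).+1 %% 5 | u - 3 == (v - 3).+1 %% 5].

Lemma K6_arrows_triangle : arrows_triangle 6 complete_adj.
Proof. by apply: arrows_triangleP; vm_compute. Qed.

Lemma K3C5_arrows_triangle : arrows_triangle 8 k3c5_adj.
Proof. by apply: arrows_triangleP; vm_compute. Qed.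

Lemma colour_eq_off (a b i : 'I_3) :
  a != i -> b != i -> (a == ordS i) = (b == ordS i) -> a = b.
Proof.
by case: a b i => [[|[|[|//]]] ?] [[|[|[|//]]] ?] [[|[|[|//]]] ?] //= *; apply: val_inj.
Qed.

Section MonochromaticTriangle.
Variables (T : eqType) (adj : rel T) (c : T -> T -> 'I_3) (w : T).

Definition mono_triangle : Prop :=
  exists x y z, [/\ adj x y, adj y z, adj x z, c x y = c y z & c y z = c x z].

Lemma arrowing_nbhd_mono_triangle n nadj (g : nat -> T) (i : 'I_3) :
  arrows_triangle n nadj ->
  (forall u v, u < v -> v < n -> nadj u v -> adj (g u) (g v)) ->
  (forall u, u < n -> adj w (g u) && (c w (g u) == i)) -> mono_triangle.
Proof.
move=> arrows g_adj g_nbhd.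
(* Two colours other than [i] are equal iff they agree on being [ordS i]. *)
have [u [v [x [uv vx xn [a_uv a_vx a_ux Euv Evx]]]]] :=
  arrows (fun u v => c (g u) (g v) == ordS i).
have vn := ltn_trans vx xn; have un := ltn_trans uv vn.
have with_hub y z : y < z -> z < n -> nadj y z -> c (g y) (g z) = i -> mono_triangle.
  move=> yz zn a_yz E; have /andP[wy /eqP Ey] := g_nbhd y (ltn_trans yz zn).
  have /andP[wz /eqP Ez] := g_nbhd z zn.
  by exists w, (g y), (g z); rewrite wy wz g_adj // Ey Ez E.
case: (eqVneq (c (g u) (g v)) i) => [/(with_hub u v uv vn a_uv) //|n_uv].
case: (eqVneq (c (g v) (g x)) i) => [/(with_hub v x vx xn a_vx) //|n_vx].
case: (eqVneq (c (g u) (g x)) i) => [/(with_hub u x (ltn_trans uv vx) xn a_ux) //|n_ux].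
exists (g u), (g v), (g x); rewrite !g_adj ?(ltn_trans uv vx) //.
by split=> //; apply: (@colour_eq_off _ _ i).
Qed.

Lemma clique6_mono_triangle (L : seq T) (i : 'I_3) :
  pairwise adj L -> all (fun x => adj w x && (c w x == i)) L -> 6 <= size L ->
  mono_triangle.
Proof.
move=> /(pairwiseP w) L_adj /(all_nthP w) L_nbhd L_size.
apply: (@arrowing_nbhd_mono_triangle 6 complete_adj (nth w L) i K6_arrows_triangle).
- by move=> u v uv vn _; apply: L_adj; rewrite // inE; lia.
- by move=> u un; apply: L_nbhd; lia.
Qed.

Lemma clique3_join_C5_mono_triangle (L : seq T) (h : 'I_5 -> T) (i : 'I_3) :
  pairwise adj L -> all (fun x => adj w x && (c w x == i)) L -> 3 <= size L ->
  (forall x k, x \in L -> adj x (h k)) ->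
  (forall k k', c5_adj k k' -> adj (h k) (h k')) ->
  (forall k, adj w (h k) && (c w (h k) == i)) -> mono_triangle.
Proof.
move=> /(pairwiseP w) L_adj /(all_nthP w) L_nbhd L_size L_h h_adj h_nbhd.
pose g u := if u < 3 then nth w L u else h (inord (u - 3)).
apply: (@arrowing_nbhd_mono_triangle 8 k3c5_adj g i K3C5_arrows_triangle).
- move=> u v uv v8 /andP[_]; rewrite /g.
  case: (ltnP u 3) => u3; case: (ltnP v 3) => v3 /= adj_uv.
  + by apply: L_adj; rewrite // inE; lia.
  + by apply: L_h; apply: mem_nth; lia.
  + lia.
  + apply: h_adj; move: adj_uv; rewrite /c5_adj /= !inordK; lia.
- by move=> u u8; rewrite /g; case: ifP => // u3; apply: L_nbhd; lia.
Qed.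

End MonochromaticTriangle.

Definition QV_to_sum (x : QV) : option ('I_4 + 'I_4 * 'I_5) :=
  match x with W => None | Kv i => Some (inl i) | Cv j k => Some (inr (j, k)) end.
Definition QV_of_sum (y : option ('I_4 + 'I_4 * 'I_5)) : QV :=
  match y with None => W | Some (inl i) => Kv i | Some (inr (j, k)) => Cv j k end.
Lemma QV_to_sumK : cancel QV_to_sum QV_of_sum. Proof. by case. Qed.
HB.instance Definition _ := Equality.copy QV (can_type QV_to_sumK).

(* Explicit enumerations: [enum 'I_n] does not reduce under [vm_compute]. *)
Definition colours : seq 'I_3 :=
  [:: Ordinal (isT : 0 < 3); Ordinal (isT : 1 < 3); Ordinal (isT : 2 < 3)].
Definition c5_vertices : seq 'I_5 :=
  [:: Ordinal (isT : 0 < 5); Ordinal (isT : 1 < 5); Ordinal (isT : 2 < 5);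
      Ordinal (isT : 3 < 5); Ordinal (isT : 4 < 5)].

Lemma mem_colours (i : 'I_3) : i \in colours.
Proof. by case: i => [[|[|[|//]]] ?]. Qed.

Lemma mem_c5_vertices (k : 'I_5) : k \in c5_vertices.
Proof. by case: k => [[|[|[|[|[|//]]]]] ?]. Qed.

Lemma forall_c5_colouring (P : ('I_5 -> 'I_3) -> bool) :
  all (fun x0 => all (fun x1 => all (fun x2 => all (fun x3 => all (fun x4 =>
    P (fun k => nth x0 [:: x0; x1; x2; x3; x4] k))
  colours) colours) colours) colours) colours ->
  forall f, P f.
Proof.
move=> P_all f; pose x k : 'I_3 := f (nth ord0 c5_vertices k).
have -> : f = fun k => nth (x 0) [:: x 0; x 1; x 2; x 3; x 4] k.
  by apply: functional_extensionality => -[[|[|[|[|[|//]]]]] ?]; congr f; apply: val_inj.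
by move: P_all => /allP/(_ _ (mem_colours _))/allP/(_ _ (mem_colours _))
  /allP/(_ _ (mem_colours _))/allP/(_ _ (mem_colours _))/allP/(_ _ (mem_colours _)).
Qed.

Lemma ohead_filter (T : Type) (p : pred T) s x : ohead (filter p s) = Some x -> p x.
Proof. by elim: s => //= y s IH; case: ifP => [py /= [<-] // | _ /IH]. Qed.

(* A largest clique of the 5-cycle inside the colour class [i] of [f]. *)
Definition c5_clique (f : 'I_5 -> 'I_3) (i : 'I_3) : seq 'I_5 :=
  if ohead [seq k <- c5_vertices | (f k == i) && (f (ordS k) == i)] is Some k then [:: k; ordS k]
  else if ohead [seq k <- c5_vertices | f k == i] is Some k then [:: k] else [::].

Lemma c5_clique_colour f i : all (fun k => f k == i) (c5_clique f i).
Proof.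
rewrite /c5_clique; case E2: ohead => [k|].
  by case/andP: (ohead_filter E2) => /= -> ->.
by case E1: ohead => [k|] //=; rewrite (ohead_filter E1).
Qed.

Lemma c5_clique_pairwise f i : pairwise c5_adj (c5_clique f i).
Proof.
rewrite /c5_clique; case: ohead => [k|]; first by rewrite /= /c5_adj /= eqxx.
by case: ohead.
Qed.

Lemma c5_clique_sizes f :
  (3 <= sumn [seq size (c5_clique f i) | i <- colours]) ||
  has (fun i => all (fun k => f k == i) c5_vertices && (size (c5_clique f i) == 2)) colours.
Proof. by move: f; apply: forall_c5_colouring; vm_compute. Qed.

Lemma sumn_count_colours (T : Type) (f : T -> 'I_3) s :
  sumn [seq count (fun x => f x == i) s | i <- colours] = size s.
Proof. by elim: s => //= x s; case: (f x) => [[|[|[|//]]] ?] /=; lia. Qed.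

Section ColourCliques.
Variable col : QV -> 'I_3.

Definition khat4_class (i : 'I_3) : seq QV := [seq Kv v | v <- enum 'I_4 & col (Kv v) == i].

Definition cycle_clique (t : 'I_4) (i : 'I_3) : seq QV :=
  [seq Cv t k | k <- c5_clique (fun k => col (Cv t k)) i].

Definition colour_clique (ts : seq 'I_4) (i : 'I_3) : seq QV :=
  khat4_class i ++ flatten [seq cycle_clique t i | t <- ts].

Lemma khat4_class_pairwise i :
  col (Kv vert_a) != col (Kv vert_b) -> pairwise Q_adj (khat4_class i).
Proof.
move=> col_ab; rewrite pairwise_map.
apply: (@sub_in_pairwise _ [pred v | col (Kv v) == i] [rel x y | x != y]).
- move=> x y /eqP col_x /eqP col_y /= x_y; rewrite /khat4_adj x_y /=.
  apply: contra col_ab => /orP[] /andP[/eqP x_val /eqP y_val].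
  + have [<- <-] : x = vert_a /\ y = vert_b by split; apply: val_inj.
    by rewrite col_x col_y.
  + have [<- <-] : x = vert_b /\ y = vert_a by split; apply: val_inj.
    by rewrite col_x col_y.
- by apply/allP => v; rewrite mem_filter => /andP[].
- by rewrite -uniq_pairwise filter_uniq ?enum_uniq.
Qed.

Lemma cycle_clique_pairwise t i : pairwise Q_adj (cycle_clique t i).
Proof.
rewrite pairwise_map; apply: sub_pairwise (c5_clique_pairwise _ i).
by move=> k k' /= adj_kk'; rewrite eqxx.
Qed.

Lemma colour_clique_pairwise ts i :
  col (Kv vert_a) != col (Kv vert_b) -> uniq ts -> pairwise Q_adj (colour_clique ts i).
Proof.
move=> col_ab uniq_ts; rewrite pairwise_cat khat4_class_pairwise //=.
apply/andP; split.
  by apply/allrelP => _ _ /mapP[v _ ->] /flattenP[_ /mapP[t _ ->] /mapP[k _ ->]].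
elim: ts uniq_ts => //= t ts IH /andP[t_ts uniq_ts].
rewrite pairwise_cat cycle_clique_pairwise IH // !andbT.
apply/allrelP => _ _ /mapP[k _ ->] /flattenP[_ /mapP[t' t'_ts ->] /mapP[k' _ ->]] /=.
by case: eqVneq t'_ts t_ts => // <- ->.
Qed.

Lemma colour_clique_nbhd ts i : all (fun x => Q_adj W x && (col x == i)) (colour_clique ts i).
Proof.
rewrite all_cat all_map; apply/andP; split.
  by apply/allP => v; rewrite mem_filter => /andP[].
apply/allP => x /flattenP[_ /mapP[t _ ->]]; apply/allP: x.
by rewrite /cycle_clique all_map; apply: c5_clique_colour.
Qed.

Lemma colour_clique_join ts t i :
  t \notin ts -> forall x k, x \in colour_clique ts i -> Q_adj x (Cv t k).
Proof.
move=> t_ts x k; rewrite mem_cat => /orP[/mapP[v _ ->] //|].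
case/flattenP=> _ /mapP[t' t'_ts ->] /mapP[k' _ ->] /=.
by case: eqVneq t'_ts t_ts => // -> ->.
Qed.

Lemma size_colour_clique ts i :
  size (colour_clique ts i) = size (khat4_class i) + sumn [seq size (cycle_clique t i) | t <- ts].
Proof. by rewrite size_cat size_flatten /shape -map_comp. Qed.

Lemma size_khat4_classes : sumn [seq size (khat4_class i) | i <- colours] = 4.
Proof.
have <- : size (enum 'I_4) = 4 by rewrite size_enum_ord.
rewrite -(sumn_count_colours (col \o Kv)); congr sumn; apply: eq_map => i.
by rewrite size_map size_filter.
Qed.

Lemma khat4_class_nonempty i : (exists v, col (Kv v) = i) -> 0 < size (khat4_class i).
Proof.
case=> v col_v; rewrite size_map size_filter -has_count; apply/hasP.
by exists v; [rewrite mem_enum | apply/eqP].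
Qed.

Lemma cycle_clique_sizes t :
  (3 <= sumn [seq size (cycle_clique t i) | i <- colours]) ||
  has (fun i => [forall k, col (Cv t k) == i] && (size (cycle_clique t i) == 2)) colours.
Proof.
have size_cc i : size (cycle_clique t i) = size (c5_clique (fun k => col (Cv t k)) i).
  by rewrite size_map.
rewrite (eq_map size_cc).
case/orP: (c5_clique_sizes (fun k => col (Cv t k))) => [-> //|/hasP[i colour_i]].
case/andP=> mono_t size2; apply/orP; right; apply/hasP; exists i; rewrite // size_cc size2 andbT.
by apply/forallP => k; apply: (allP mono_t); apply: mem_c5_vertices.
Qed.

End ColourCliques.

Section WithoutMonochromaticTriangle.
Variable c : QV -> QV -> 'I_3.
Hypothesis no_triangle : ~ mono_triangle Q_adj c.
Hypothesis col_ab : c W (Kv vert_a) != c W (Kv vert_b).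

Lemma colour_clique_le5 ts i : uniq ts -> size (colour_clique (c W) ts i) <= 5.
Proof.
move=> uniq_ts; rewrite leqNgt; apply/negP => size6; apply: no_triangle.
apply: (@clique6_mono_triangle _ _ _ W (colour_clique (c W) ts i) i) => //.
  exact: colour_clique_pairwise.
exact: colour_clique_nbhd.
Qed.

Lemma mono_cycle_colour_clique_le2 t ts i : uniq ts -> t \notin ts ->
  (forall k, c W (Cv t k) == i) -> size (colour_clique (c W) ts i) <= 2.
Proof.
move=> uniq_ts t_ts mono_t; rewrite leqNgt; apply/negP => size3; apply: no_triangle.
apply: (@clique3_join_C5_mono_triangle _ _ _ W (colour_clique (c W) ts i) (Cv t) i).
- exact: colour_clique_pairwise.
- exact: colour_clique_nbhd.
- exact: size3.
- exact: colour_clique_join.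
- by move=> k k' /= adj_kk'; rewrite eqxx.
- exact: mono_t.
Qed.

Lemma cycle_clique_weight t ts : uniq ts -> t \notin ts ->
  (3 <= sumn [seq size (cycle_clique (c W) t i) | i <- colours]) ||
  has (fun i => (size (cycle_clique (c W) t i) == 2) &&
                (size (colour_clique (c W) ts i) <= 2)) colours.
Proof.
move=> uniq_ts t_ts; case/orP: (cycle_clique_sizes (c W) t) => [-> //|/hasP[i colour_i]].
case/andP=> /forallP mono_t size2; apply/orP; right; apply/hasP; exists i => //.
by rewrite size2 (mono_cycle_colour_clique_le2 uniq_ts t_ts mono_t).
Qed.

End WithoutMonochromaticTriangle.

Theorem lemma3 (c : QV -> QV -> 'I_3)
  (c_sym : forall x y, c x y = c y x)
  (h_all : forall col : 'I_3, exists v : 'I_4, c W (Kv v) = col)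
  (h_ab : c W (Kv vert_a) <> c W (Kv vert_b)) :
  exists x y z : QV,
    [/\ Q_adj x y, Q_adj y z, Q_adj x z, c x y = c y z & c y z = c x z].
Proof.
(* A triangle is read off as c x y, c y z, c x z. *)
apply: NNPP => no_triangle; have col_ab : c W (Kv vert_a) != c W (Kv vert_b) by apply/eqP.
have class_pos : all (fun i => 0 < size (khat4_class (c W) i)) colours.
  by apply/allP => i _; apply: khat4_class_nonempty.
pose o0 := Ordinal (isT : 0 < 4); pose o1 := Ordinal (isT : 1 < 4).
pose o2 := Ordinal (isT : 2 < 4); pose o3 := Ordinal (isT : 3 < 4).
have le5 : all (fun i => size (colour_clique (c W) [:: o0; o1; o2; o3] i) <= 5) colours.
  by apply/allP => i _; apply: colour_clique_le5.
have := @cycle_clique_weight c no_triangle col_ab o0 [:: o1; o2; o3] isT isT.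
have := @cycle_clique_weight c no_triangle col_ab o1 [:: o0; o2; o3] isT isT.
have := @cycle_clique_weight c no_triangle col_ab o2 [:: o0; o1; o3] isT isT.
have := @cycle_clique_weight c no_triangle col_ab o3 [:: o0; o1; o2] isT isT.
move: le5 class_pos (size_khat4_classes (c W)); rewrite /= !size_colour_clique /=.
lia.
Qed.
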